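(* Let $T$ be a complete theory. If $\langle\varphi(x,y),\langle a_\eta\rangle_{\eta\in{}^{\omega>}2}\rangle$ is an antichain tree, then $\varphi(x,y)$ witnesses SOP$_1$.
   Context: Work in a monster model of $T$; ${}^{\omega>}2$ is the binary tree with initial-segment order $\trianglelefteq$. A subset $X\subseteq{}^{\omega>}2$ is an antichain if its elements are pairwise $\trianglelefteq$-incomparable. $\langle\varphi(x,y),\langle a_\eta\rangle_{\eta\in{}^{\omega>}2}\rangle$ is an antichain tree if for every $X\subseteq{}^{\omega>}2$, $\{\varphi(x,a_\eta):\eta\in X\}$ is consistent if and only if $X$ is an antichain. $\varphi$ witnesses SOP$_1$ if there is $\langle b_\eta\rangle_{\eta\in{}^{\omega>}2}$ such that for every $\eta\in{}^\omega2$, $\{\varphi(x,b_{\eta\lceil n}):n<\omega\}$ is consistent, and for all $\eta,\nu\in{}^{\omega>}2$, $\{\varphi(x,b_{\eta^\frown\langle1\rangle}),\varphi(x,b_{\eta^\frown\langle0\rangle^\frown\nu})\}$ is inconsistent. *)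

From mathcomp Require Import all_boot.
Set Implicit Arguments.
Unset Strict Implicit.
Unset Printing Implicit Defensive.

Definition tree := seq bool.

Definition tle (eta nu : tree) : Prop := prefix eta nu.

Definition antichain (X : tree -> Prop) : Prop :=
  forall eta nu, X eta -> X nu -> eta <> nu -> ~ tle eta nu.

(* Consistency (with the elementary diagram of the model M) of the set of
   formulas {phi(x, a_eta) : eta in X}: by compactness, this is finite
   satisfiability in M. *)
Definition consistent (M : Type) (n m : nat)
  (phi : n.-tuple M -> m.-tuple M -> Prop) (a : tree -> m.-tuple M)
  (X : tree -> Prop) : Prop :=
  forall s : seq tree, (forall eta, eta \in s -> X eta) ->
    exists x : n.-tuple M, forall eta, eta \in s -> phi x (a eta).

Definition antichain_tree (M : Type) (n m : nat)
  (phi : n.-tuple M -> m.-tuple M -> Prop) (a : tree -> m.-tuple M) : Prop :=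
  forall X : tree -> Prop, consistent phi a X <-> antichain X.

Definition restr (eta : nat -> bool) (k : nat) : tree := mkseq eta k.

Definition witnesses_SOP1 (M : Type) (n m : nat)
  (phi : n.-tuple M -> m.-tuple M -> Prop) : Prop :=
  exists b : tree -> m.-tuple M,
    (forall eta : nat -> bool,
        consistent phi b (fun s => exists k, s = restr eta k)) /\
    (forall eta nu : tree,
        ~ consistent phi b
            (fun s => s = rcons eta true \/ s = eta ++ false :: nu)).

From mathcomp Require Import all_boot.

(* Re-index the tree along [f s = h(s) 1] ([enc_node]), where [h] ([enc])
   replaces each letter 1 by 0 and each letter 0 by 01.  Every code word
   starts with 0, so a proper extension of [s] is sent to a longer node that
   branches off [f s] at its final 1: chains become antichains.  On the other
   hand [f (eta 1) = h(eta) 01] is a proper initial segment of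
   [f (eta 0 nu) = h(eta) 01 h(nu) 1], so the SOP_1 pairs become comparable.
   Transporting the antichain tree along [f] therefore yields an SOP_1 tree. *)

Definition enc_bit (c : bool) : tree := if c then [:: false] else [:: false; true].

Definition enc (s : tree) : tree := flatten (map enc_bit s).

Definition enc_node (s : tree) : tree := rcons (enc s) true.

Definition image_set (f : tree -> tree) (X : tree -> Prop) : tree -> Prop :=
  fun t => exists2 s, X s & t = f s.

Lemma enc_cat s t : enc (s ++ t) = enc s ++ enc t.
Proof. by rewrite /enc map_cat flatten_cat. Qed.

Lemma enc_cons c s : enc (c :: s) = false :: drop 1 (enc_bit c) ++ enc s.
Proof. by case: c. Qed.

Lemma enc_node_cat s t : enc_node (s ++ t) = enc s ++ enc_node t.
Proof. by rewrite /enc_node enc_cat rcons_cat. Qed.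

Lemma enc_node_ext_incomparable s c r :
  ~~ prefix (enc_node s) (enc_node (s ++ c :: r)) /\
  ~~ prefix (enc_node (s ++ c :: r)) (enc_node s).
Proof.
rewrite enc_node_cat /enc_node enc_cons; split.
  by rewrite -cats1 prefix_catr // eqxx.
apply/negP => /size_prefix; rewrite size_cat !size_rcons /=.
by rewrite addnS ltnS -[X in _ <= X]addn0 leq_add2l.
Qed.

Lemma antichain_enc_node_chain (X : tree -> Prop) :
  (forall s t, X s -> X t -> prefix s t \/ prefix t s) ->
  antichain (image_set enc_node X).
Proof.
move=> chainX _ _ [s Xs ->] [t Xt ->] neq_st.
have [/prefixP[[|c r] def_t] | /prefixP[[|c r] def_s]] := chainX s t Xs Xt.
- by rewrite def_t cats0 in neq_st.
- by rewrite /tle def_t; apply/negP; case: (enc_node_ext_incomparable s c r).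
- by rewrite def_s cats0 in neq_st.
- by rewrite /tle def_s; apply/negP; case: (enc_node_ext_incomparable t c r).
Qed.

Lemma restr_prefix (e : nat -> bool) k j : k <= j -> prefix (restr e k) (restr e j).
Proof.
move=> le_kj; have -> : restr e k = take k (restr e j).
  by rewrite /restr /mkseq -map_take take_iota (minn_idPl le_kj).
exact: prefix_take.
Qed.

Lemma not_antichain_enc_node_sop eta nu :
  ~ antichain (image_set enc_node (fun s => s = rcons eta true \/ s = eta ++ false :: nu)).
Proof.
move=> anti.
apply: (anti (enc_node (rcons eta true)) (enc_node (eta ++ false :: nu)));
  [by exists (rcons eta true); first left | by exists (eta ++ false :: nu); first right | |].
all: rewrite enc_node_cat -cats1 enc_node_cat /=.
- move/(congr1 size); rewrite !size_cat /= size_rcons.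
  by move/eqP; rewrite eqn_add2l.
- by rewrite /tle prefix_catr // eqxx /enc_node /= prefix0s.
Qed.

Lemma consistent_image (M : Type) (n m : nat) (phi : n.-tuple M -> m.-tuple M -> Prop)
    (a : tree -> m.-tuple M) (f : tree -> tree) (X : tree -> Prop) :
  consistent phi (a \o f) X <-> consistent phi a (image_set f X).
Proof.
split=> consX s sX.
- have [u -> uX] : exists2 u, s = map f u & forall t, t \in u -> X t.
    elim: s sX => [|t s IHs] sX; first by exists [::].
    have [v Xv ->] := sX t (mem_head t s).
    have [|u -> uX] := IHs; first by move=> t' st'; apply: sX; rewrite inE st' orbT.
    by exists (v :: u) => // w; rewrite inE => /predU1P[->|/uX].
  have [x phix] := consX u uX.
  by exists x => _ /mapP[v uv ->]; apply: phix.
- have [|x phix] := consX (map f s); first by move=> _ /mapP[t st ->]; exists t; auto.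
  by exists x => t st; apply: phix; apply: map_f.
Qed.

Theorem proposition4p4 (M : Type) (n m : nat)
  (phi : n.-tuple M -> m.-tuple M -> Prop) (a : tree -> m.-tuple M) :
  antichain_tree phi a -> witnesses_SOP1 phi.
Proof.
move=> antichain_tree_a; exists (a \o enc_node); split.
- move=> e; apply/consistent_image/antichain_tree_a/antichain_enc_node_chain.
  move=> _ _ [k ->] [j ->].
  by case: (leqP k j) => [le_kj | /ltnW le_jk]; [left | right]; apply: restr_prefix.
- move=> eta nu /consistent_image/antichain_tree_a.
  exact: not_antichain_enc_node_sop.
Qed.
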